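(* Let $R$ be a semiring and $\theta$ a congruence on $R$. The following are equivalent: (1) $\theta$ is a $k$-congruence; (2) $R/\theta$ has a zero $0_\theta$ and $\theta\subseteq \kappa_{0_\theta}$; (3) $R/\theta$ has a zero $0_\theta$ and $\theta=\kappa_{0_\theta}$. (Here the zero $0_\theta$ of $R/\theta$ is a $\theta$-class, i.e. a subset of $R$, and it is an ideal of $R$.)
   Context: A semiring $(R,+,\cdot)$ is a set with two binary operations such that $(R,+)$ is a commutative semigroup, $(R,\cdot)$ is a semigroup, and multiplication distributes over addition from both sides; no additive neutral element or identity is assumed. An element $0$ of a semiring $S$ is a zero of $S$ if $0+s=s$ and $0s=s0=0$ for all $s\in S$. An ideal of $R$ is a nonempty subset $A\subseteq R$ with $a+b\in A$ and $ra,ar\in A$ for all $a,b\in A$, $r\in R$. A congruence on $R$ is an equivalence relation $\equiv$ such that $a\equiv b$ implies $a+c\equiv b+c$, $ac\equiv bc$, $ca\equiv cb$ for all $a,b,c\in R$; $R/\theta$ denotes the quotient semiring of $\theta$-classes with $[x]+[y]=[x+y]$, $[x][y]=[xy]$. For an ideal $A$ of $R$, $\kappa_A$ is the congruence on $R$ defined by $x\,\kappa_A\,y$ iff $x+a=y+b$ for some $a,b\in A$. A congruence $\theta$ on $R$ is a $k$-congruence if $\theta=\kappa_A$ for some ideal $A$ of $R$. Throughout, $|R|\geq 2$. *)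

Set Implicit Arguments.

Section Semiring.
Variable R : Type.
Variables (add mul : R -> R -> R).

(* (R,+) commutative semigroup, (R,.) semigroup, two-sided distributivity;
   no neutral elements assumed. *)
Definition is_semiring : Prop :=
  (forall a b c, add a (add b c) = add (add a b) c) /\
  (forall a b, add a b = add b a) /\
  (forall a b c, mul a (mul b c) = mul (mul a b) c) /\
  (forall a b c, mul a (add b c) = add (mul a b) (mul a c)) /\
  (forall a b c, mul (add a b) c = add (mul a c) (mul b c)).

Definition is_ideal (A : R -> Prop) : Prop :=
  (exists a, A a) /\
  (forall a b, A a -> A b -> A (add a b)) /\
  (forall r a, A a -> A (mul r a) /\ A (mul a r)).

Definition is_congruence (theta : R -> R -> Prop) : Prop :=
  (forall a, theta a a) /\
  (forall a b, theta a b -> theta b a) /\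
  (forall a b c, theta a b -> theta b c -> theta a c) /\
  (forall a b c, theta a b ->
     theta (add a c) (add b c) /\ theta (mul a c) (mul b c) /\ theta (mul c a) (mul c b)).

Definition kappa (A : R -> Prop) (x y : R) : Prop :=
  exists a b, A a /\ A b /\ add x a = add y b.

Definition is_k_congruence (theta : R -> R -> Prop) : Prop :=
  exists A, is_ideal A /\ forall x y, theta x y <-> kappa A x y.

(* theta-class of z, i.e. the element [z] of R/theta viewed as a subset of R. *)
Definition cls (theta : R -> R -> Prop) (z : R) : R -> Prop := fun x => theta x z.

(* [z] is a zero of the quotient semiring R/theta:
   [z]+[s]=[s], [z][s]=[s][z]=[z] for all s, with [x]+[y]=[x+y], [x][y]=[xy]. *)
Definition is_quot_zero (theta : R -> R -> Prop) (z : R) : Prop :=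
  forall s, theta (add z s) s /\ theta (mul z s) z /\ theta (mul s z) z.

End Semiring.

(* For a congruence theta whose quotient has a zero class Z, kappa_Z is always
   contained in theta: x + a = y + b with a, b in Z gives
   x ~ x + a = y + b ~ y, since adding an element of the zero class is the
   identity on classes.  The zero class is moreover an ideal, so (2) and (3)
   are equivalent and imply (1).  Conversely, if theta = kappa_A for an ideal
   A, any a in A represents a zero of R/theta (a + s + a = s + (a + a) and
   a s + a = a + a s) and A lies in the class of a, so theta = kappa_A is
   contained in kappa of that class. *)


Set Implicit Arguments.

Section KappaOfIdeal.

Variables (R : Type) (add mul : R -> R -> R).
Hypothesis add_assoc : forall a b c, add a (add b c) = add (add a b) c.
Hypothesis add_comm : forall a b, add a b = add b a.

Lemma kappa_monotone (A B : R -> Prop) x y :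
  (forall a, A a -> B a) -> kappa add A x y -> kappa add B x y.
Proof.
  intros AB [a [b [Aa [Ab E]]]].
  exists a, b; auto.
Qed.

Lemma kappa_in_class (A : R -> Prop) a c :
  A a -> A c -> kappa add A c a.
Proof.
  intros Aa Ac.
  exists a, c; split; [exact Aa | split; [exact Ac | apply add_comm]].
Qed.

Lemma kappa_ideal_quot_zero (A : R -> Prop) (HA : is_ideal add mul A) a :
  A a -> is_quot_zero add mul (kappa add A) a.
Proof.
  destruct HA as [_ [A_add A_mul]].
  intros Aa s; split; [| split].
  - exists a, (add a a); split; [exact Aa | split; [exact (A_add a a Aa Aa) |]].
    rewrite (add_comm a s), <- add_assoc; reflexivity.
  - apply kappa_in_class; [exact Aa | exact (proj2 (A_mul s a Aa))].
  - apply kappa_in_class; [exact Aa | exact (proj1 (A_mul s a Aa))].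
Qed.

End KappaOfIdeal.

Lemma quot_zero_ext (R : Type) (add mul : R -> R -> R) (theta eta : R -> R -> Prop) z :
  (forall x y, theta x y <-> eta x y) ->
  is_quot_zero add mul theta z -> is_quot_zero add mul eta z.
Proof.
  intros E Hz s; destruct (Hz s) as [H1 [H2 H3]].
  repeat split; apply E; assumption.
Qed.

Section ZeroClass.

Variables (R : Type) (add mul : R -> R -> R) (theta : R -> R -> Prop).
Hypothesis add_assoc : forall a b c, add a (add b c) = add (add a b) c.
Hypothesis add_comm : forall a b, add a b = add b a.
Hypothesis Htheta : is_congruence add mul theta.

Lemma congruence_addl a b c : theta a b -> theta (add c a) (add c b).
Proof.
  destruct Htheta as [_ [_ [_ comp]]].
  intros H; rewrite (add_comm c a), (add_comm c b); apply comp, H.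
Qed.

Lemma quot_zero_absorbs z x c :
  is_quot_zero add mul theta z -> cls theta z c -> theta (add x c) x.
Proof.
  destruct Htheta as [_ [_ [trans _]]].
  intros Hz Hc; apply trans with (add x z).
  - apply congruence_addl, Hc.
  - rewrite add_comm; apply Hz.
Qed.

Lemma kappa_quot_zero_sub z x y :
  is_quot_zero add mul theta z -> kappa add (cls theta z) x y -> theta x y.
Proof.
  destruct Htheta as [_ [sym [trans _]]].
  intros Hz [c [d [Hc [Hd E]]]].
  apply trans with (add x c); [apply sym; eapply quot_zero_absorbs; eauto |].
  rewrite E; eapply quot_zero_absorbs; eauto.
Qed.

Lemma quot_zero_ideal z :
  is_quot_zero add mul theta z -> is_ideal add mul (cls theta z).
Proof.
  destruct Htheta as [refl [_ [trans comp]]].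
  intros Hz; split; [exists z; apply refl | split].
  - intros a b Ha Hb; apply trans with a; [apply quot_zero_absorbs with z; assumption | exact Ha].
  - intros r a Ha; split.
    + apply trans with (mul r z); [apply comp, Ha | apply Hz].
    + apply trans with (mul z r); [apply comp, Ha | apply Hz].
Qed.

Lemma k_congruence_quot_zero :
  is_k_congruence add mul theta ->
  exists z, is_quot_zero add mul theta z /\
    forall x y, theta x y <-> kappa add (cls theta z) x y.
Proof.
  intros [A [HA E]].
  destruct (proj1 HA) as [a Aa].
  assert (Hz : is_quot_zero add mul theta a).
  { apply quot_zero_ext with (kappa add A);
      [intros x y; split; apply E | apply kappa_ideal_quot_zero; assumption]. }
  exists a; split; [exact Hz | intros x y; split].
  - intros Hxy; apply E in Hxy; revert Hxy; apply kappa_monotone.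
    intros c Ac; apply E, kappa_in_class; assumption.
  - apply kappa_quot_zero_sub, Hz.
Qed.

End ZeroClass.

Theorem theorem3p3 (R : Type) (add mul : R -> R -> R)
  (HR : is_semiring add mul) (Hcard : exists x y : R, x <> y)
  (theta : R -> R -> Prop) (Htheta : is_congruence add mul theta) :
  (is_k_congruence add mul theta <->
     (exists z, is_quot_zero add mul theta z /\
        forall x y, theta x y -> kappa add (cls theta z) x y)) /\
  (is_k_congruence add mul theta <->
     (exists z, is_quot_zero add mul theta z /\
        forall x y, theta x y <-> kappa add (cls theta z) x y)).
Proof.
  destruct HR as [add_assoc [add_comm _]].
  assert (one_to_three := k_congruence_quot_zero add_assoc add_comm Htheta).
  assert (three_to_one : forall z, is_quot_zero add mul theta z ->
      (forall x y, theta x y <-> kappa add (cls theta z) x y) ->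
      is_k_congruence add mul theta).
  { intros z Hz E; exists (cls theta z); split; [exact (quot_zero_ideal add_comm Htheta Hz) | exact E]. }
  assert (two_to_three : forall z, is_quot_zero add mul theta z ->
      (forall x y, theta x y -> kappa add (cls theta z) x y) ->
      forall x y, theta x y <-> kappa add (cls theta z) x y).
  { intros z Hz H x y; split; [apply H | exact (kappa_quot_zero_sub add_comm Htheta Hz)]. }
  split; split.
  - intros H; destruct (one_to_three H) as [z [Hz E]].
    exists z; split; [exact Hz | intros x y; apply E].
  - intros [z [Hz H]]; exact (three_to_one z Hz (two_to_three z Hz H)).
  - exact one_to_three.
  - intros [z [Hz E]]; exact (three_to_one z Hz E).
Qed.
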